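(* Let $0<q<1$ and let $A_q(t)=\sum_{n=0}^{\infty}A_{n,q}\dfrac{t^n}{[n]_q!}$ be a power series, analytic at $t=0$, with $A_q(0)=A_{0,q}\neq 0$. Define the $q$-Appell polynomials $A_{n,q}(x)$ by \[ A_q(t)\,e_q(tx)=\sum_{n=0}^{\infty}A_{n,q}(x)\frac{t^n}{[n]_q!}, \] and define the numbers $\alpha_n$ by the expansion \[ t\,\frac{D_{q,t}A_q(t)}{A_q(qt)}=\sum_{n=0}^{\infty}\alpha_n\frac{t^n}{[n]_q!}. \] Then for every integer $n\ge 1$, \begin{align*} A_{n,q}(qx)&=\frac{1}{[n]_q}\sum_{k=0}^{n}\begin{bmatrix}n\\k\end{bmatrix}_q\alpha_{n-k}\,q^{k}A_{k,q}(x)+x\,q^{n}A_{n-1,q}(x)\\ &=\frac{1}{[n]_q}\alpha_0 q^{n}A_{n,q}(x)+q^{n}\left(x+\alpha_1q^{-1}\right)A_{n-1,q}(x)+\frac{1}{[n]_q}\sum_{k=0}^{n-2}\begin{bmatrix}n\\k\end{bmatrix}_q\alpha_{n-k}\,q^{k}A_{k,q}(x). \end{align*}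
   Context: $[n]_q=\frac{1-q^n}{1-q}$, $[0]_q!=1$, $[n]_q!=[n]_q[n-1]_q\cdots[1]_q$, and $\begin{bmatrix}n\\k\end{bmatrix}_q=\frac{[n]_q!}{[k]_q![n-k]_q!}$. The $q$-exponential is $e_q(t)=\sum_{n=0}^\infty \frac{t^n}{[n]_q!}$. The $q$-derivative is $D_{q,x}f(x)=\frac{f(qx)-f(x)}{(q-1)x}$ (for $x\neq0$; for power series/polynomials it acts by $D_{q,x}x^n=[n]_qx^{n-1}$), and $D_{q,t}$ is the same operator in the variable $t$. *)

From mathcomp Require Import all_boot all_order all_algebra.
From mathcomp Require Import reals.
Set Implicit Arguments. Unset Strict Implicit. Unset Printing Implicit Defensive.
Import Order.TTheory GRing.Theory Num.Theory.
Local Open Scope ring_scope.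

Section QDefs.
Variable R : realType.
Implicit Types (q x : R) (n k : nat).

Definition qnum q n : R := (1 - q ^+ n) / (1 - q).
Definition qfact q n : R := \prod_(0 <= i < n) qnum q i.+1.
Definition qbinom q n k : R := qfact q n / (qfact q k * qfact q (n - k)).

(* Formal power series in t, represented by their ordinary coefficient
   sequences: f represents \sum_n f n t^n. *)
Definition fps := nat -> R.
Definition fps_mul (f g : fps) : fps :=
  fun n => \sum_(0 <= k < n.+1) f k * g (n - k)%N.
Definition fps_mulX (f : fps) : fps := fun n => if n is m.+1 then f m else 0.
Definition fps_qderiv q (f : fps) : fps := fun n => qnum q n.+1 * f n.+1.
Definition fps_dil q (f : fps) : fps := fun n => q ^+ n * f n.
Definition qegf q (c : nat -> R) : fps := fun n => c n / qfact q n.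
Definition qexp_tx q x : fps := qegf q (fun n => x ^+ n).

(* q-Appell polynomials A_{n,q}(x): coefficient of t^n/[n]_q! in
   A_q(t) e_q(t x), where A_q(t) = \sum_n a_n t^n/[n]_q! *)
Definition qAppell q (a : nat -> R) n x : R :=
  qfact q n * fps_mul (qegf q a) (qexp_tx q x) n.

End QDefs.

From mathcomp Require Import all_boot all_order all_algebra.
From mathcomp Require Import reals.
From mathcomp Require Import ring.
Set Implicit Arguments. Unset Strict Implicit. Unset Printing Implicit Defensive.
Import Order.TTheory GRing.Theory Num.Theory.
Local Open Scope ring_scope.

(* The q-Appell polynomials at [q x] have generating function [A_q(t) e_q(q t x)].
   Applying [t D_{q,t}] and the q-Leibniz rule, with [D_{q,t} e_q(q t x) = q x e_q(q t x)]
   and [t D_{q,t} A_q(t) = alpha(t) A_q(q t)], turns it into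
   [(alpha(t) + q x t) A_q(q t) e_q(q t x)], i.e. [(alpha(t) + q x t)] times the generating
   function of the [A_{n,q}(x)] dilated by [q]. Comparing coefficients of [t^n / [n]_q!]
   gives the first identity; the second splits off the terms [k = n - 1, n] of the sum. *)

Section QNumbers.
Variables (R : realType) (q : R).

Lemma qnum0 : qnum q 0 = 0.
Proof. by rewrite /qnum expr0 subrr mul0r. Qed.

(* For [q = 1] every [qnum] is [0] (division by zero), so no hypothesis on [q] is needed. *)
Lemma qnumD m n : qnum q (m + n) = qnum q m + q ^+ m * qnum q n.
Proof.
rewrite /qnum exprD; have [->|q_neq1] := eqVneq q 1.
  by rewrite subrr invr0 !mulr0 addr0.
have one_subq : 1 - q != 0 by rewrite subr_eq0 eq_sym.
by field.
Qed.

Lemma qfact0 : qfact q 0 = 1.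
Proof. by rewrite /qfact big_geq. Qed.

Lemma qfactS n : qfact q n.+1 = qfact q n * qnum q n.+1.
Proof. by rewrite /qfact big_nat_recr. Qed.

Hypotheses (q_ge0 : 0 <= q) (q_lt1 : q < 1).

Lemma qnumS_gt0 n : 0 < qnum q n.+1.
Proof. by rewrite /qnum divr_gt0 // subr_gt0 // exprn_ilt1. Qed.

Lemma qnumS_neq0 n : qnum q n.+1 != 0.
Proof. by rewrite gt_eqF // qnumS_gt0. Qed.

Lemma qfact_neq0 n : qfact q n != 0.
Proof.
by rewrite /qfact prodf_seq_neq0; apply/allP => i _; rewrite qnumS_neq0.
Qed.

Lemma qbinomnn n : qbinom q n n = 1.
Proof. by rewrite /qbinom subnn qfact0 mulr1 divff // qfact_neq0. Qed.

Lemma qbinomSn n : qbinom q n.+1 n = qnum q n.+1.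
Proof.
rewrite /qbinom subSnn qfactS (qfactS 0) qfact0 mul1r [qnum q 1]/qnum expr1.
have qfact_n := qfact_neq0 n.
have one_subq : 1 - q != 0 by rewrite subr_eq0 eq_sym lt_eqF.
by field; rewrite qfact_n one_subq.
Qed.

End QNumbers.

Section FormalPowerSeries.
Variable R : realType.
Implicit Types (f g h : fps R) (p r : {poly R}).

Lemma fps_mul_coefM {f g p r n} :
  (forall i, (i <= n)%N -> p`_i = f i) -> (forall i, (i <= n)%N -> r`_i = g i) ->
  fps_mul f g n = (p * r)`_n.
Proof.
move=> pf rg; rewrite coefM /fps_mul big_mkord; apply: eq_bigr => -[j ltjn] _ /=.
by rewrite pf -1?ltnS // rg // leq_subr.
Qed.

Let trunc n f : {poly R} := \poly_(i < n.+1) f i.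

Let coef_trunc n f i : (i <= n)%N -> (trunc n f)`_i = f i.
Proof. by rewrite coef_poly ltnS => ->. Qed.

Lemma fps_mulC f g n : fps_mul f g n = fps_mul g f n.
Proof.
by rewrite (fps_mul_coefM (@coef_trunc n f) (@coef_trunc n g))
  (fps_mul_coefM (@coef_trunc n g) (@coef_trunc n f)) mulrC.
Qed.

Lemma fps_mulA f g h n : fps_mul (fps_mul f g) h n = fps_mul f (fps_mul g h) n.
Proof.
have coefM_trunc f' g' i : (i <= n)%N ->
    (trunc n f' * trunc n g')`_i = fps_mul f' g' i.
  move=> le_in; apply/esym/fps_mul_coefM => j le_ji;
  by rewrite coef_trunc // (leq_trans le_ji).
rewrite (fps_mul_coefM (coefM_trunc f g) (@coef_trunc n h)).
by rewrite (fps_mul_coefM (@coef_trunc n f) (coefM_trunc g h)) mulrA.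
Qed.

Lemma eq_fps_mul f f' g g' : f =1 f' -> g =1 g' -> fps_mul f g =1 fps_mul f' g'.
Proof. by move=> ff' gg' n; apply: eq_bigr => j _; rewrite ff' gg'. Qed.

Lemma fps_mulZr (c : R) (f g : fps R) :
  fps_mul f (fun n => c * g n) =1 fun n => c * fps_mul f g n.
Proof. by move=> n; rewrite /fps_mul mulr_sumr; apply: eq_bigr => j _; ring. Qed.

Lemma fps_mulX_mull f g : fps_mulX (fps_mul f g) =1 fps_mul (fps_mulX f) g.
Proof.
case=> [|n]; first by rewrite /fps_mulX /fps_mul big_nat1 mul0r.
by rewrite /fps_mulX /fps_mul [in RHS]big_nat_recl //= mul0r add0r.
Qed.

Lemma fps_mul_dil (q : R) f g :
  fps_mul (fps_dil q f) (fps_dil q g) =1 fps_dil q (fps_mul f g).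
Proof.
move=> n; rewrite /fps_mul /fps_dil mulr_sumr; apply: eq_big_nat => j /andP[_ ltjn].
by rewrite mulrACA -exprD subnKC.
Qed.

Lemma fps_qderiv_dil (q : R) f :
  fps_qderiv q (fps_dil q f) =1 fun n => q * fps_dil q (fps_qderiv q f) n.
Proof. by move=> n; rewrite /fps_qderiv /fps_dil exprS; ring. Qed.

(* The q-Leibniz rule [D_q (f g)(t) = f(q t) D_q g(t) + D_q f(t) g(t)]; it rests on
   [[n+1]_q = [j]_q + q^j [n+1-j]_q]. *)
Lemma fps_qderiv_mul (q : R) f g :
  fps_qderiv q (fps_mul f g)
  =1 fun n => fps_mul (fps_dil q f) (fps_qderiv q g) n + fps_mul (fps_qderiv q f) g n.
Proof.
move=> n; rewrite /fps_qderiv /fps_mul mulr_sumr.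
under eq_big_nat => j /andP[_ ltjn].
  rewrite -(subnKC (ltnSE ltjn)) qnumD mulrDl addnC addnK.
over.
rewrite big_split /= addrC; congr (_ + _).
  rewrite big_nat_recr //= subnn qnum0 mulr0 mul0r addr0.
  by apply: eq_big_nat => j /andP[_ ltjn]; rewrite /fps_dil subSn //; ring.
rewrite big_nat_recl //= qnum0 mul0r add0r.
by apply: eq_big_nat => j _; rewrite subSS; ring.
Qed.

End FormalPowerSeries.

Section QExponentialSeries.
Variables (R : realType) (q : R).

Lemma fps_dil_qegf (u : nat -> R) :
  fps_dil q (qegf q u) =1 qegf q (fun n => q ^+ n * u n).
Proof. by move=> n; rewrite /fps_dil /qegf mulrA. Qed.

Lemma qexp_tx_mulq (x : R) : qexp_tx q (q * x) =1 fps_dil q (qexp_tx q x).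
Proof. by move=> n; rewrite /qexp_tx /qegf /fps_dil exprMn mulrA. Qed.

Hypotheses (q_ge0 : 0 <= q) (q_lt1 : q < 1).

Lemma qegf_mul (u v : nat -> R) n :
  fps_mul (qegf q u) (qegf q v) n
  = (qfact q n)^-1 * \sum_(0 <= k < n.+1) qbinom q n k * u k * v (n - k)%N.
Proof.
rewrite /fps_mul mulr_sumr; apply: eq_bigr => k _.
have qf_n := qfact_neq0 q_ge0 q_lt1 n; have qf_k := qfact_neq0 q_ge0 q_lt1 k.
have qf_nk := qfact_neq0 q_ge0 q_lt1 (n - k).
by rewrite /qegf /qbinom; field; rewrite qf_k qf_nk qf_n.
Qed.

Lemma fps_qderiv_qexp (x : R) :
  fps_qderiv q (qexp_tx q x) =1 fun n => x * qexp_tx q x n.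
Proof.
move=> n; have qf_n := qfact_neq0 q_ge0 q_lt1 n.
have qnum_n := qnumS_neq0 q_ge0 q_lt1 n.
by rewrite /fps_qderiv /qexp_tx /qegf qfactS exprS; field; rewrite qf_n qnum_n.
Qed.

End QExponentialSeries.

Section QAppell.
Variables (R : realType) (q : R) (a alpha : nat -> R).
Hypotheses (q_ge0 : 0 <= q) (q_lt1 : q < 1).

Lemma qAppell_qegf (x : R) :
  fps_mul (qegf q a) (qexp_tx q x) =1 qegf q (fun n => qAppell q a n x).
Proof.
move=> n; have qf_n := qfact_neq0 q_ge0 q_lt1 n.
by rewrite /qegf /qAppell mulrAC divff // mul1r.
Qed.

Hypothesis alphaE : forall m,
  fps_mul (qegf q alpha) (fps_dil q (qegf q a)) m
  = fps_mulX (fps_qderiv q (qegf q a)) m.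

(* The coefficient of [t^(n+1)] in
   [t D_{q,t} (A_q(t) e_q(q t x)) = (alpha(t) + q x t) A_q(q t) e_q(q t x)]. *)
Lemma qderiv_qAppell_mulq (x : R) n :
  qnum q n.+1 * fps_mul (qegf q a) (fps_dil q (qexp_tx q x)) n.+1
  = fps_mul (qegf q alpha) (fps_dil q (fps_mul (qegf q a) (qexp_tx q x))) n.+1
    + x * q ^+ n.+1 * fps_mul (qegf q a) (qexp_tx q x) n.
Proof.
set b := qegf q a; set E := qexp_tx q x.
have -> : qnum q n.+1 * fps_mul b (fps_dil q E) n.+1
          = fps_qderiv q (fps_mul b (fps_dil q E)) n by [].
rewrite fps_qderiv_mul addrC; congr (_ + _).
  rewrite -[LHS]/(fps_mulX (fps_mul (fps_qderiv q b) (fps_dil q E)) n.+1).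
  rewrite fps_mulX_mull (eq_fps_mul (fun m => esym (alphaE m)) (frefl _)).
  by rewrite fps_mulA (eq_fps_mul (frefl _) (fps_mul_dil q b E)).
have dqE m : fps_qderiv q (fps_dil q E) m = q * x * fps_dil q E m.
  by rewrite fps_qderiv_dil /fps_dil (fps_qderiv_qexp q_ge0 q_lt1) /E; ring.
by rewrite (eq_fps_mul (frefl _) dqE) fps_mulZr fps_mul_dil /fps_dil exprS; ring.
Qed.

Lemma qAppell_mulq (x : R) n :
  qnum q n.+1 * qAppell q a n.+1 (q * x)
  = \sum_(0 <= k < n.+2) qbinom q n.+1 k * alpha (n.+1 - k)%N * q ^+ k * qAppell q a k x
    + qnum q n.+1 * x * q ^+ n.+1 * qAppell q a n x.
Proof.
have qf_n := qfact_neq0 q_ge0 q_lt1 n.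
have dilE : fps_dil q (fps_mul (qegf q a) (qexp_tx q x))
            =1 qegf q (fun k => q ^+ k * qAppell q a k x).
  by move=> k; rewrite /fps_dil qAppell_qegf /qegf mulrA.
rewrite [qAppell _ _ n.+1 _]/qAppell (eq_fps_mul (frefl _) (qexp_tx_mulq q x)).
rewrite mulrCA qderiv_qAppell_mulq fps_mulC (eq_fps_mul dilE (frefl _)) qegf_mul //.
under eq_bigr do rewrite mulrAC mulrA.
rewrite qAppell_qegf /qegf qfactS.
by field; rewrite qf_n qnumS_neq0.
Qed.

End QAppell.

Theorem theorem1 (R : realType) (q : R) (a alpha : nat -> R)
  (hq0 : 0 < q) (hq1 : q < 1) (ha0 : a 0%N != 0)
  (halpha : forall m : nat,
     fps_mul (qegf q alpha) (fps_dil q (qegf q a)) m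
     = fps_mulX (fps_qderiv q (qegf q a)) m) :
  forall (n : nat) (x : R), (1 <= n)%N ->
    qAppell q a n (q * x)
    = (qnum q n)^-1 * \sum_(0 <= k < n.+1)
          qbinom q n k * alpha (n - k)%N * q ^+ k * qAppell q a k x
      + x * q ^+ n * qAppell q a n.-1 x
  /\
    (qnum q n)^-1 * \sum_(0 <= k < n.+1)
          qbinom q n k * alpha (n - k)%N * q ^+ k * qAppell q a k x
      + x * q ^+ n * qAppell q a n.-1 x
    = (qnum q n)^-1 * alpha 0%N * q ^+ n * qAppell q a n x
      + q ^+ n * (x + alpha 1%N * q^-1) * qAppell q a n.-1 x
      + (qnum q n)^-1 * \sum_(0 <= k < n.-1)
          qbinom q n k * alpha (n - k)%N * q ^+ k * qAppell q a k x.
Proof.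
move=> [//|n] x _ /=; have q_ge0 := ltW hq0.
have qnum_neq0 := qnumS_neq0 q_ge0 hq1 n; have q_neq0 : q != 0 by rewrite gt_eqF.
split.
  apply: (mulfI qnum_neq0); rewrite (qAppell_mulq q_ge0 hq1 halpha) mulrDr mulVKf //.
  by rewrite !mulrA.
rewrite !big_nat_recr //= subSnn subnn qbinomnn // qbinomSn // !exprS.
by field; rewrite qnum_neq0 q_neq0.
Qed.
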